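(* In the setting of the context (battery capacity $c$, nonnegative i.i.d. energy arrivals distributed as $X$, increasing concave reward $r$ with continuous derivative $r'$, and $r'(\underline{x})>r'(\overline{x})$), let $$c^*\triangleq\max\{c\ge 0:\ r'(c)\ge \mathbb{E}[r'(X)\mathbf{1}\{X<c\}]\},$$ which is the largest battery capacity for which the greedy policy is throughput-optimal. Then $$c^*\ge \underline{c}\triangleq\sup\{c\in(\underline{x},\overline{x}):\ r'(c)\ge \rho(c)\,\overline{r'}_{[\underline{x},c]}(\underline{\xi})\},\qquad \underline{\xi}\triangleq\max\left\{\frac{\mu-(1-\rho(c))\overline{x}}{\rho(c)},\,\underline{x}\right\}.$$ In particular, for $r(x)=\frac12\log(1+x)$, $$\underline{c}=\sup\{c\in(\underline{x},\overline{x}):\ c\le \overline{\zeta}(c)\},\qquad \overline{\zeta}(c)\triangleq\frac{(1-\rho(c))(1+\underline{x})+\rho(c)\underline{\xi}}{\rho(c)}.$$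
   Context: Setting: $X_1,X_2,\dots$ are i.i.d. copies of a nonnegative random variable $X$; a policy chooses $G_t=f_t(X_1,\dots,X_t)$; battery $B_t=\min\{B_{t-1}-G_{t-1}+X_t,c\}$ with $B_0=G_0=0$; admissibility means $G_t\le B_t$; throughput is $\liminf_n\frac1n\mathbb{E}[\sum_{t\le n}r(G_t)]$; the greedy policy is $G_t=B_t$. The reward $r:[0,\infty)\to[0,\infty)$ is monotonically increasing and concave with continuous derivative $r'$. Notation: $\rho(x)\triangleq\mathbb{P}(X<x)$, $\underline{x}\triangleq\max\{x\ge0:\rho(x)=0\}$, $\overline{x}\triangleq\inf\{x\ge0:\rho(x)=1\}$ (possibly $+\infty$; then $(1-\rho(c))\overline{x}=+\infty$ for $c<\overline{x}$ so $\underline{\xi}=\underline{x}$), $r'(\infty)\triangleq\lim_{x\to\infty}r'(x)$, $\mu\triangleq\mathbb{E}[X]$. For $c>\underline{x}$, $\overline{r'}_{[\underline{x},c]}$ denotes the upper concave envelope (smallest concave majorant) of $r'$ restricted to $[\underline{x},c]$. Logarithms are natural. *)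

From HB Require Import structures.
From mathcomp Require Import all_boot all_order all_algebra.
From mathcomp Require Import all_classical all_reals all_analysis.
Set Implicit Arguments. Unset Strict Implicit. Unset Printing Implicit Defensive.
Import Order.TTheory GRing.Theory Num.Theory.
Import numFieldNormedType.Exports.
Local Open Scope classical_set_scope.
Local Open Scope ring_scope.

Section Defs.
Context {d : measure_display} {T : measurableType d} {R : realType}
  (P : probability T R) (X : {RV P >-> R}).

Definition rho (x : R) : R := fine (P [set t | X t < x]).

Definition xlo : R := sup [set x : R | 0 <= x /\ rho x = 0].

Definition xhi : \bar R := ereal_inf [set x%:E | x in [set x : R | 0 <= x /\ rho x = 1]].

Definition mu : \bar R := 'E_P[X].

(* underline xi (c) = max {(mu - (1 - rho c) xhi)/rho c, xlo};
   when xhi = +oo the first term is -oo, so xi = xlo *)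
Definition xi (c : R) : R :=
  match xhi with
  | EFin xb => Num.max ((fine mu - (1 - rho c) * xb) / rho c) xlo
  | _ => xlo
  end.

(* the hypothesis r'(underline x) > r'(overline x), with r'(oo) = lim_{x->oo} r'(x) *)
Definition deriv_gap (rp : R -> R) : Prop :=
  match xhi with
  | EFin xb => rp xb < rp xlo
  | _ => lim (rp x @[x --> +oo]) < rp xlo
  end.

Definition cstar (rp : R -> R) : \bar R :=
  ereal_sup [set c%:E | c in [set c : R | 0 <= c /\
     (\int[P]_t (rp (X t) * (X t < c)%R%:R)%:E <= (rp c)%:E)%E]].

End Defs.

Arguments rho {d T R} P X x.
Arguments xlo {d T R} P X.
Arguments xhi {d T R} P X.
Arguments mu {d T R} P X.
Arguments xi {d T R} P X c.
Arguments deriv_gap {d T R} P X rp.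
Arguments cstar {d T R} P X rp.

Definition concave_on {R : realType} (a b : R) (g : R -> R) : Prop :=
  forall x y t, a <= x <= b -> a <= y <= b -> 0 <= t <= 1 ->
    t * g x + (1 - t) * g y <= g (t * x + (1 - t) * y).

Definition concave_env {R : realType} (f : R -> R) (a b x : R) : R :=
  inf [set g x | g in [set g : R -> R | concave_on a b g /\
                                        forall y, a <= y <= b -> f y <= g y]].

Section Defs2.
Context {d : measure_display} {T : measurableType d} {R : realType}
  (P : probability T R) (X : {RV P >-> R}).

Definition clow (rp : R -> R) : \bar R :=
  ereal_sup [set c%:E | c in [set c : R | xlo P X < c /\ (c%:E < xhi P X)%E /\
     rho P X c * concave_env rp (xlo P X) c (xi P X c) <= rp c]].

Definition zetabar (c : R) : R :=
  ((1 - rho P X c) * (1 + xlo P X) + rho P X c * xi P X c) / rho P X c.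

End Defs2.

Arguments clow {d T R} P X rp.
Arguments zetabar {d T R} P X c.

From HB Require Import structures.
From mathcomp Require Import all_boot all_order all_algebra.
From mathcomp Require Import all_classical all_reals all_analysis.
From mathcomp Require Import ring lra.
Import Order.TTheory GRing.Theory Num.Theory.
Import numFieldNormedType.Exports measurable_realfun.
Local Open Scope classical_set_scope.
Local Open Scope ring_scope.

(* Fix c in the set defining the lower bound, write xi for xi(c) and let g be a concave
   majorant of r' on [xlo, c].  As the derivative of a nondecreasing concave function, r' is
   nonnegative and nonincreasing, so min (g xlo) g is again a concave majorant, now
   nonincreasing; hence it has a supergradient b <= 0 at xi.  Since X >= xlo almost surely,
     E[r'(X); X < c] <= rho(c) g(xi) + b (E[X; X < c] - rho(c) xi) <= rho(c) g(xi),
   because E[X; X < c] >= xlo rho(c) and, as X <= xhi almost surely,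
   E[X; X < c] >= mu - xhi (1 - rho(c)).  Taking the infimum over g gives
   E[r'(X); X < c] <= rho(c) env(xi) <= r'(c), so c lies in the set defining c*.
   For r'(x) = 1 / (2 (1 + x)), which is convex, the concave envelope on [xlo, c] is the
   chord, and rho(c) chord(xi) <= r'(c) rearranges to c <= zetabar(c). *)

Section Slopes.
Context {R : realType}.
Implicit Types (f : R -> R) (u v w : R).

Definition slope f u v : R := (f v - f u) / (v - u).

Lemma slopeC f u v : slope f u v = slope f v u.
Proof. by rewrite /slope -opprB -[v - u]opprB invrN mulrNN. Qed.

Lemma slope_ge0 f u v :
  (u < v -> f u <= f v) -> (v < u -> f v <= f u) -> 0 <= slope f u v.
Proof.
move=> fuv fvu; case: (ltgtP u v) => [uv|vu|->]; last by rewrite /slope !subrr mul0r.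
  by rewrite divr_ge0 // subr_ge0; [exact: fuv | exact: ltW].
by rewrite slopeC divr_ge0 // subr_ge0; [exact: fvu | exact: ltW].
Qed.

Lemma chord_weightE {u w} v : u < w -> (w - v) / (w - u) * u + (1 - (w - v) / (w - u)) * w = v.
Proof. by move=> uw; field; rewrite subr_eq0 gt_eqF. Qed.

Lemma chord_weight_itv {u v w} : u <= v -> v <= w -> u < w -> 0 <= (w - v) / (w - u) <= 1.
Proof.
move=> uv vw uw; have wu0 : 0 < w - u by rewrite subr_gt0.
apply/andP; split; first by apply: divr_ge0; lra.
rewrite ler_pdivrMr // mul1r; lra.
Qed.

Lemma three_slopes f {u v w} : u < v -> v < w ->
  (w - v) / (w - u) * f u + (1 - (w - v) / (w - u)) * f w <= f v ->
  slope f u w <= slope f u v /\ slope f v w <= slope f u w.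
Proof.
move=> uv vw; have uw := lt_trans uv vw.
have [vu0 wv0 wu0] : [/\ 0 < v - u, 0 < w - v & 0 < w - u] by rewrite !subr_gt0.
have -> : (w - v) / (w - u) * f u + (1 - (w - v) / (w - u)) * f w =
    ((w - v) * f u + (v - u) * f w) / (w - u) by field; rewrite gt_eqF.
rewrite ler_pdivrMr // => fv.
rewrite /slope; split; rewrite ler_pdivlMr // mulrAC ler_pdivrMr //; nra.
Qed.

End Slopes.

Section DerivativeBounds.
Context {R : realType}.
Implicit Types (f : R -> R) (x l m e : R).

Lemma is_derive_ge_slope {f x l m e} : is_derive x 1 f l -> 0 < e ->
  (forall y, y != x -> `|y - x| < e -> m <= slope f x y) -> m <= l.
Proof.
move=> [fx <-] e0 fxm; apply: limr_ge => //; near=> h.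
have -> : h^-1 *: (f (h *: 1 + x) - f x) = slope f x (h + x).
  by rewrite /slope addrK mulrC -[h *: 1]/(h * 1) mulr1.
apply: fxm; rewrite ?addrK.
- by rewrite -subr_eq0 addrK; near: h; exact: nbhs_dnbhs_neq.
- by near: h; exact: dnbhs0_lt.
Unshelve. all: by end_near.
Qed.

Lemma is_derive_le_slope {f x l m e} : is_derive x 1 f l -> 0 < e ->
  (forall y, y != x -> `|y - x| < e -> slope f x y <= m) -> l <= m.
Proof.
move=> /is_deriveN fl e0 fxm; rewrite -lerN2.
apply: (is_derive_ge_slope fl e0) => y yx yxe.
by rewrite /slope !fctE -opprD mulNr lerN2; exact: fxm.
Qed.

Lemma right_continuous_ge {g : R -> R} {a m e : R} :
  {within `[a, +oo[, continuous g} -> 0 < e ->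
  (forall x, a < x -> x < a + e -> m <= g x) -> m <= g a.
Proof.
move=> /continuous_within_itvcyP[_ ga] e0 gm.
rewrite -(cvg_lim _ ga) //; apply: limr_ge; first by apply/cvg_ex; exists (g a).
near=> x; apply: gm; near: x; first exact: nbhs_right_gt.
by apply: nbhs_right_lt; rewrite ltrDl.
Unshelve. all: by end_near.
Qed.

End DerivativeBounds.

Section ConcaveDerivative.
Context {R : realType} (r r' : R -> R).
Hypothesis r_nondecreasing : forall x y : R, 0 <= x -> x <= y -> r x <= r y.
Hypothesis r_concave : forall x y t : R, 0 <= x -> 0 <= y -> 0 <= t <= 1 ->
  t * r x + (1 - t) * r y <= r (t * x + (1 - t) * y).
Hypothesis r_derive : forall {x : R}, 0 < x -> is_derive x 1 r (r' x).
Hypothesis r'_continuous : {within `[0, +oo[, continuous r'}.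

Let concave_three_slopes {u v w} : 0 <= u -> u < v -> v < w ->
  slope r u w <= slope r u v /\ slope r v w <= slope r u w.
Proof.
move=> u0 uv vw; have uw := lt_trans uv vw.
apply: three_slopes => //; rewrite -{3}(chord_weightE v uw).
by apply: r_concave; [| lra | apply: chord_weight_itv; lra].
Qed.

Lemma derive_ge0_nondecreasing x : 0 <= x -> 0 <= r' x.
Proof.
have r'_pos_ge0 y : 0 < y -> 0 <= r' y.
  move=> y0; apply: (is_derive_ge_slope (r_derive y0) y0) => z _.
  rewrite ltr_distl => /andP[z0 _].
  by apply: slope_ge0 => ?; apply: r_nondecreasing; lra.
rewrite le_eqVlt => /predU1P[<-|]; last exact: r'_pos_ge0.
by apply: (right_continuous_ge r'_continuous ltr01) => z z0 _; rewrite r'_pos_ge0.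
Qed.

Let slope_le_derive {a b} : 0 < a -> a < b -> slope r a b <= r' a.
Proof.
move=> a0 ab; pose e := Num.min a (b - a).
have [ea eba] : e <= a /\ e <= b - a by rewrite !ge_min !lexx ?orbT.
apply: (is_derive_ge_slope (e := e) (r_derive a0)); first by rewrite lt_min a0 subr_gt0.
move=> z /lt_total/orP[za|az]; rewrite ltr_distl => /andP[z1 z2].
  have z0 : 0 <= z by lra.
  by rewrite [slope r a z]slopeC; have [] := concave_three_slopes z0 za ab; lra.
have zb : z < b by lra.
by have [] := concave_three_slopes (ltW a0) az zb; lra.
Qed.

Let derive_le_slope {a b} : 0 < a -> a < b -> r' b <= slope r a b.
Proof.
move=> a0 ab; have b0 := lt_trans a0 ab.
apply: (is_derive_le_slope (e := b - a) (r_derive b0)); first by rewrite subr_gt0.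
move=> z /lt_total/orP[zb|bz]; rewrite ltr_distl => /andP[z1 _].
  have az : a < z by lra.
  by rewrite [slope r b z]slopeC; have [] := concave_three_slopes (ltW a0) az zb.
by have [] := concave_three_slopes (ltW a0) ab bz; lra.
Qed.

Lemma derive_nonincreasing_concave x y : 0 <= x -> x <= y -> r' y <= r' x.
Proof.
have r'_le a : 0 < a -> a < y -> r' y <= r' a.
  by move=> a0 ay; exact: le_trans (derive_le_slope a0 ay) (slope_le_derive a0 ay).
move=> x0; rewrite le_eqVlt => /predU1P[<-//|xy].
have [x_gt0|x_le0] := ltP 0 x; first exact: r'_le.
have x_eq0 : x = 0 by apply/le_anti/andP.
rewrite x_eq0 in xy *; apply: (right_continuous_ge r'_continuous xy) => z z0.
by rewrite add0r; exact: r'_le.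
Qed.

End ConcaveDerivative.

Section ConcaveMajorant.
Context {R : realType}.
Implicit Types (f g h : R -> R) (a c k x y : R).

Lemma concave_on_min a c g h : concave_on a c g -> concave_on a c h ->
  concave_on a c (fun x => Num.min (g x) (h x)).
Proof.
move=> gc hc x y t xac yac /[dup] t01 /andP[t0 t1]; rewrite le_min.
have [gx hx] : Num.min (g x) (h x) <= g x /\ Num.min (g x) (h x) <= h x.
  by rewrite !ge_min !lexx ?orbT.
have [gy hy] : Num.min (g y) (h y) <= g y /\ Num.min (g y) (h y) <= h y.
  by rewrite !ge_min !lexx ?orbT.
apply/andP; split.
- by apply: le_trans (gc x y t xac yac t01); apply: lerD; apply: ler_wpM2l; lra.
- by apply: le_trans (hc x y t xac yac t01); apply: lerD; apply: ler_wpM2l; lra.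
Qed.

Lemma concave_on_cst a c k : concave_on a c (fun=> k).
Proof. by move=> x y t _ _ _; lra. Qed.

Lemma concave_on_cap_nonincreasing a c g x y : concave_on a c g ->
  a <= x -> x <= y -> y <= c -> Num.min (g a) (g y) <= Num.min (g a) (g x).
Proof.
move=> gc ax xy yc; have [gax|gxa] := leP (g a) (g x).
  by rewrite ge_min lexx.
rewrite ge_min; apply/orP; right.
rewrite leNgt; apply/negP => gxy.
have ax' : a < x by rewrite lt_neqAle ax andbT; apply: contraTneq gxa => ->; rewrite ltxx.
have ay := lt_le_trans ax' xy.
have /andP[t0 t1] := chord_weight_itv ax xy ay.
have := gc a y ((y - x) / (y - a)); rewrite chord_weightE //.
have aac : a <= a <= c by rewrite lexx /=; lra.
have yac : a <= y <= c by rewrite yc andbT; lra.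
move=> /(_ aac yac (chord_weight_itv ax xy ay)).
have xy' : x < y by rewrite lt_neqAle xy andbT; apply: contraTneq gxy => ->; rewrite ltxx.
have : 0 < (y - x) / (y - a) by rewrite divr_gt0 // subr_gt0.
nra.
Qed.

Lemma nonincreasing_concave_supergradient {a c h xi} : concave_on a c h ->
  (forall x y, a <= x -> x <= y -> y <= c -> h y <= h x) -> a <= xi -> xi < c ->
  exists2 b, b <= 0 & forall x, a <= x <= c -> h x <= h xi + b * (x - xi).
Proof.
move=> hc hdecr axi xic.
pose S := [set slope h xi y | y in [set y | xi < y <= c]].
have S_ub0 : ubound S 0.
  move=> _ [y /andP[xiy yc] <-]; rewrite /slope pmulr_lle0 ?invr_gt0 ?subr_gt0 //.
  by rewrite subr_le0; apply: hdecr => //; exact: ltW.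
have S_sup : has_sup S.
  split; last by exists 0.
  by exists (slope h xi c); rewrite /S /=; exists c => //=; rewrite xic lexx.
exists (sup S); first exact: ge_sup S_sup.1 S_ub0.
move=> x /andP[ax xc]; case: (ltgtP x xi) => [xxi|xix|->]; last by rewrite subrr mulr0 addr0.
- suff : sup S <= slope h x xi.
    by rewrite /slope ler_pdivlMr ?subr_gt0 //; lra.
  apply: (ge_sup S_sup.1) => _ [y /andP[xiy yc] <-].
  have xy := lt_trans xxi xiy.
  have xac : a <= x <= c by rewrite ax xc.
  have yac : a <= y <= c by rewrite yc andbT; lra.
  have := hc x y _ xac yac (chord_weight_itv (ltW xxi) (ltW xiy) xy).
  rewrite chord_weightE // => hxi.
  by have [s1 s2] := three_slopes h xxi xiy hxi; exact: le_trans s2 s1.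
- have : slope h xi x <= sup S.
    by apply: ub_le_sup; [exact: S_sup.2 | exists x; rewrite //= xix xc].
  by rewrite /slope ler_pdivrMr ?subr_gt0 //; lra.
Qed.

Lemma concave_majorant_supergradient {f g a c xi} :
  (forall x y, a <= x -> x <= y -> y <= c -> f y <= f x) ->
  concave_on a c g -> (forall y, a <= y <= c -> f y <= g y) -> a <= xi -> xi < c ->
  exists2 b, b <= 0 & forall x, a <= x <= c -> f x <= g xi + b * (x - xi).
Proof.
move=> fdecr gc fg axi xic.
pose h x := Num.min (g a) (g x).
have hc : concave_on a c h by apply: concave_on_min => //; exact: concave_on_cst.
have hdecr x y : a <= x -> x <= y -> y <= c -> h y <= h x.
  exact: concave_on_cap_nonincreasing.
have [b b0 hb] := nonincreasing_concave_supergradient hc hdecr axi xic.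
exists b => // x /[dup] xac /andP[ax xc].
have fh : f x <= h x.
  rewrite le_min (fg x xac) andbT; apply: le_trans (fdecr _ _ (lexx a) ax xc) _.
  by apply: fg; rewrite lexx /=; exact: le_trans xc.
have hg : h xi <= g xi by rewrite ge_min lexx orbT.
by apply: le_trans fh (le_trans (hb x xac) _); rewrite lerD2r.
Qed.

Lemma le_concave_env f a c x k m :
  (forall y, a <= y <= c -> f y <= k) ->
  (forall g, concave_on a c g -> (forall y, a <= y <= c -> f y <= g y) -> m <= g x) ->
  m <= concave_env f a c x.
Proof.
move=> fk fm; apply: lb_le_inf.
  by exists k, (fun=> k); split => //; exact: concave_on_cst.
by move=> _ [g [gc fg] <-]; exact: fm.
Qed.

Definition chord f a c x := ((c - x) * f a + (x - a) * f c) / (c - a).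

Lemma concave_env_chordE f a c x : a < c -> a <= x <= c ->
  (forall y, a <= y <= c -> f y <= chord f a c y) ->
  concave_env f a c x = chord f a c x.
Proof.
move=> ac /andP[ax xc] fch.
have ca0 : c - a != 0 by rewrite subr_eq0 gt_eqF.
have ch_le g : concave_on a c g -> (forall y, a <= y <= c -> f y <= g y) ->
    chord f a c x <= g x.
  move=> gc fg; have t01 := chord_weight_itv ax xc ac.
  have aac : a <= a <= c by rewrite lexx /=; exact: ltW.
  have cac : a <= c <= c by rewrite lexx andbT; exact: ltW.
  have := gc a c _ aac cac t01; rewrite chord_weightE // => gx.
  apply: le_trans gx; have /andP[t0 t1] := t01.
  have -> : chord f a c x = (c - x) / (c - a) * f a + (1 - (c - x) / (c - a)) * f c.
    by rewrite /chord; field.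
  by apply: lerD; apply: ler_wpM2l; rewrite ?subr_ge0 //; apply: fg.
have ch_concave : concave_on a c (chord f a c).
  move=> y z t _ _ _; rewrite le_eqVlt; apply/orP; left; apply/eqP.
  by rewrite /chord; field.
apply/le_anti/andP; split.
  apply: ge_inf; last by exists (chord f a c).
  by exists (chord f a c x) => _ [g [gc fg] <-]; exact: ch_le.
apply: lb_le_inf; first by exists (chord f a c x), (chord f a c).
by move=> _ [g [gc fg] <-]; exact: ch_le.
Qed.

End ConcaveMajorant.

Section Distribution.
Context {d : measure_display} {T : measurableType d} {R : realType}
  (P : probability T R) (X : {RV P >-> R}).
Hypothesis X_ge0 : forall t, 0 <= X t.

Lemma measurable_X_lt c : measurable [set t | X t < c].
Proof.
have := measurable_funPTI X (measurable_itv `]-oo, c[).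
by congr measurable; apply/seteqP; split => t /=; rewrite in_itv.
Qed.

Let X_geE c : [set t | c <= X t] = ~` [set t | X t < c].
Proof. by apply/seteqP; split => t /=; rewrite leNgt => /negP. Qed.

Lemma measurable_X_ge c : measurable [set t | c <= X t].
Proof. by rewrite X_geE; exact/measurableC/measurable_X_lt. Qed.

Lemma rhoE c : P [set t | X t < c] = (rho P X c)%:E.
Proof.
rewrite /rho fineK // ge0_fin_numE ?measure_ge0 //.
by apply: le_lt_trans (probability_le1 P (measurable_X_lt c)) _; rewrite ltry.
Qed.

Lemma rho_ge0 c : 0 <= rho P X c.
Proof. by rewrite -lee_fin -rhoE. Qed.

Lemma rho_le1 c : rho P X c <= 1.
Proof. by rewrite -lee_fin -rhoE; exact: probability_le1 (measurable_X_lt c). Qed.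

Lemma rho_nondecreasing : {homo rho P X : x y / x <= y}.
Proof.
move=> x y xy; rewrite -lee_fin -!rhoE.
apply: le_measure; rewrite ?inE; try exact: measurable_X_lt.
by move=> t /= /lt_le_trans; apply.
Qed.

Lemma measure_X_ge c : P [set t | c <= X t] = (1 - rho P X c)%:E.
Proof. by rewrite X_geE probability_setC ?rhoE //; exact: measurable_X_lt. Qed.

Lemma rho0 : rho P X 0 = 0.
Proof.
rewrite /rho (_ : [set t | X t < 0] = set0) ?measure0 //.
by apply/seteqP; split => t //=; rewrite ltNge X_ge0.
Qed.

(* [negligibleP] would state [P A = 0] with [P] seen as a content, which [rhoE]
   does not rewrite. *)
Let negligible_measure0 A : measurable A -> P A = 0 -> P.-negligible A.
Proof. by move=> mA PA0; exists A; split. Qed.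

Let rho_null := [set x : R | 0 <= x /\ rho P X x = 0].

Let has_sup_rho_null : has_sup rho_null.
Proof.
split; first by exists 0; split; [| exact: rho0].
have [n rho_n] : exists n : nat, 0 < rho P X n%:R.
  apply: contrapT => /forallNP rho_n_null.
  suff /(negligibleP P measurableT) : P.-negligible setT.
    by move=> PT0; have := probability_setT P; rewrite PT0 => /eqP; rewrite eq_sym onee_eq0.
  apply: (negligibleS (A := \bigcup_n [set t | X t < n%:R])).
    by move=> t _; exists (Num.truncn (X t)).+1 => //=; exact: truncnS_gt.
  apply: negligible_bigcup => n; apply: negligible_measure0; first exact: measurable_X_lt.
  rewrite rhoE; congr EFin; apply/le_anti; rewrite rho_ge0 andbT leNgt.
  exact/negP/rho_n_null.
exists n%:R => x [x0 rx]; rewrite leNgt; apply/negP => nx.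
by move: rho_n; rewrite ltNge -rx rho_nondecreasing // ltW.
Qed.

Lemma xlo_ge0 : 0 <= xlo P X.
Proof. by apply: (ub_le_sup has_sup_rho_null.2); split => //; exact: rho0. Qed.

Lemma rho_gt0 c : xlo P X < c -> 0 < rho P X c.
Proof.
move=> xlo_c; rewrite lt_neqAle rho_ge0 andbT; apply/negP => /eqP rho_c.
have : c <= xlo P X.
  by apply: (ub_le_sup has_sup_rho_null.2); split => //; exact: le_trans xlo_ge0 (ltW xlo_c).
by rewrite leNgt xlo_c.
Qed.

Lemma ae_xlo_le_X : {ae P, forall t, xlo P X <= X t}.
Proof.
apply: (negligibleS (A := \bigcup_n [set t | X t < xlo P X - n.+1%:R^-1])).
  move=> t /= /negP; rewrite -ltNge => /ltr_add_invr[n Xtn].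
  by exists n => //=; move: (n.+1%:R^-1 : R) Xtn => e; lra.
apply: negligible_bigcup => n; apply: negligible_measure0; first exact: measurable_X_lt.
rewrite rhoE; congr EFin; apply/le_anti; rewrite rho_ge0 andbT.
have n_gt0 : 0 < n.+1%:R^-1 :> R by rewrite invr_gt0.
have [e [_ rho_e] lt_e] := sup_adherent n_gt0 has_sup_rho_null.
by rewrite -rho_e; apply: rho_nondecreasing; exact: ltW.
Qed.

Lemma xhi_ge0 : (0 <= xhi P X)%E.
Proof. by apply/ereal_infP => _ [x [x0 _] <-]; rewrite lee_fin. Qed.

Lemma rho_eq1 {xb} c : xhi P X = xb%:E -> xb < c -> rho P X c = 1.
Proof.
move=> xhiE xb_c; have e0 : 0 < c - xb by rewrite subr_gt0.
have := @lb_ereal_inf_adherent _ [set x%:E | x in [set x | 0 <= x /\ rho P X x = 1]] _ e0.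
rewrite -/(xhi P X) xhiE => /(_ isT) [_ [x [_ rho_x] <-]].
rewrite -EFinD lte_fin addrC subrK => x_c.
by apply/le_anti; rewrite rho_le1 -rho_x rho_nondecreasing // ltW.
Qed.

Lemma ae_X_le_xhi xb : xhi P X = xb%:E -> {ae P, forall t, X t <= xb}.
Proof.
move=> xhiE.
apply: (negligibleS (A := \bigcup_n [set t | xb + n.+1%:R^-1 <= X t])).
  move=> t /= /negP; rewrite -ltNge => /ltr_add_invr[n Xtn].
  by exists n => //=; exact: ltW.
apply: negligible_bigcup => n; apply: negligible_measure0; first exact: measurable_X_ge.
by rewrite measure_X_ge (rho_eq1 _ xhiE) ?subrr // ltrDl invr_gt0.
Qed.

End Distribution.

Section NonnegIntegral.
Context {d : measure_display} {T : measurableType d} {R : realType}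
  (mu : {measure set T -> \bar R}).
Implicit Types f g : T -> R.

Lemma ge0_integralD_fin f g : measurable_fun setT f -> measurable_fun setT g ->
  (forall t, 0 <= f t) -> (forall t, 0 <= g t) ->
  (\int[mu]_t (f t + g t)%:E = \int[mu]_t (f t)%:E + \int[mu]_t (g t)%:E)%E.
Proof.
move=> mf mg f0 g0; under eq_integral do rewrite EFinD.
apply: ge0_integralD => //; try exact/measurable_EFinP.
- by move=> t _; rewrite lee_fin.
- by move=> t _; rewrite lee_fin.
Qed.

Lemma ge0_integralZl_fin k f : 0 <= k -> measurable_fun setT f -> (forall t, 0 <= f t) ->
  (\int[mu]_t (k * f t)%:E = k%:E * \int[mu]_t (f t)%:E)%E.
Proof.
move=> k0 mf f0; under eq_integral do rewrite EFinM.
apply: ge0_integralZl_EFin => //; last exact/measurable_EFinP.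
by move=> t _; rewrite lee_fin.
Qed.

Lemma ae_ge0_le_integral_fin f g : measurable_fun setT f -> measurable_fun setT g ->
  (forall t, 0 <= f t) -> (forall t, 0 <= g t) -> {ae mu, forall t, f t <= g t} ->
  (\int[mu]_t (f t)%:E <= \int[mu]_t (g t)%:E)%E.
Proof.
move=> mf mg f0 g0 fg; apply: ae_ge0_le_integral => //; try exact/measurable_EFinP.
- by move=> t _; rewrite lee_fin.
- by move=> t _; rewrite lee_fin.
- by apply: filterS fg => t fgt _; rewrite lee_fin.
Qed.

End NonnegIntegral.

Section TruncatedMean.
Context {d : measure_display} {T : measurableType d} {R : realType}
  (P : probability T R) (X : {RV P >-> R}).
Hypothesis X_ge0 : forall t, 0 <= X t.

Definition truncated_mean c : R := fine (\int[P]_t (X t * (X t < c)%R%:R)%:E)%E.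

Lemma measurable_indic_X_lt c : measurable_fun setT (fun t => (X t < c)%R%:R : R).
Proof.
rewrite (_ : (fun t => _) = \1_[set t | X t < c]).
  exact/measurable_indic/measurable_X_lt.
by apply/funext => t; rewrite indicE mem_setE.
Qed.

Let measurable_indic_X_ge c : measurable_fun setT (fun t => (c <= X t)%R%:R : R).
Proof.
rewrite (_ : (fun t => _) = \1_[set t | c <= X t]).
  exact/measurable_indic/measurable_X_ge.
by apply/funext => t; rewrite indicE mem_setE.
Qed.

Lemma integral_indic_lt c : (\int[P]_t ((X t < c)%R%:R : R)%:E)%E = (rho P X c)%:E.
Proof.
rewrite (eq_integral (fun t => (\1_[set t | X t < c] t)%:E)); last first.
  by move=> t _; rewrite indicE mem_setE.
by rewrite integral_indic ?setIT //; [exact: rhoE | exact: measurable_X_lt].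
Qed.

Lemma integral_indic_ge c : (\int[P]_t ((c <= X t)%R%:R : R)%:E)%E = (1 - rho P X c)%:E.
Proof.
rewrite (eq_integral (fun t => (\1_[set t | c <= X t] t)%:E)); last first.
  by move=> t _; rewrite indicE mem_setE.
by rewrite integral_indic ?setIT //; [exact: measure_X_ge | exact: measurable_X_ge].
Qed.

Local Hint Resolve measurable_indic_X_lt : core.

Let measurable_X_indic c : measurable_fun setT (fun t => X t * (X t < c)%R%:R).
Proof. exact/measurable_funM/measurable_indic_X_lt. Qed.

Let measurable_cst_indic_lt (k c : R) : measurable_fun setT (fun t => k * (X t < c)%R%:R).
Proof. exact/measurable_funM/measurable_indic_X_lt. Qed.

Let measurable_cst_indic_ge (k c : R) : measurable_fun setT (fun t => k * (c <= X t)%R%:R).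
Proof. exact: measurable_funM. Qed.

Let X_indic_ge0 (c : R) t : 0 <= X t * (X t < c)%R%:R.
Proof. exact: mulr_ge0. Qed.

Lemma truncated_mean_ub c : 0 <= c ->
  (\int[P]_t (X t * (X t < c)%R%:R)%:E <= (c * rho P X c)%:E)%E.
Proof.
move=> c0; rewrite EFinM -integral_indic_lt -ge0_integralZl_fin //.
apply: ae_ge0_le_integral_fin => //; first by move=> t; exact: mulr_ge0.
by apply: aeW => t; case: (ltP (X t) c) => Xc; rewrite ?mulr1 ?mulr0 // ltW.
Qed.

Lemma truncated_meanE c : 0 <= c ->
  (\int[P]_t (X t * (X t < c)%R%:R)%:E)%E = (truncated_mean c)%:E.
Proof.
move=> c0; rewrite fineK // ge0_fin_numE; last by apply: integral_ge0 => t _; rewrite lee_fin.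
by apply: le_lt_trans (truncated_mean_ub c c0) _; rewrite ltry.
Qed.

Lemma xlo_rho_le_truncated_mean c : 0 <= c -> xlo P X * rho P X c <= truncated_mean c.
Proof.
move=> c0; rewrite -lee_fin -truncated_meanE // EFinM -integral_indic_lt.
rewrite -ge0_integralZl_fin ?xlo_ge0 //.
apply: ae_ge0_le_integral_fin => //; first by move=> t; apply: mulr_ge0; rewrite ?xlo_ge0.
by apply: filterS (ae_xlo_le_X P X X_ge0) => t xlo_X; rewrite ler_wpM2r.
Qed.

Lemma mean_le_truncated_mean c xb : 0 <= c -> xhi P X = xb%:E ->
  (mu P X <= (truncated_mean c + xb * (1 - rho P X c))%:E)%E.
Proof.
move=> c0 xhiE; have xb0 : 0 <= xb by rewrite -lee_fin -xhiE xhi_ge0.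
rewrite EFinD -truncated_meanE // EFinM -integral_indic_ge -ge0_integralZl_fin //.
rewrite /mu expectation_def -ge0_integralD_fin //; last by move=> t; exact: mulr_ge0.
apply: ae_ge0_le_integral_fin => //.
- exact: measurable_funD.
- by move=> t; apply: addr_ge0 => //; exact: mulr_ge0.
apply: filterS (ae_X_le_xhi P X _ xhiE) => t X_xb.
by case: (ltP (X t) c) => Xc; rewrite ?mulr1 ?mulr0 ?addr0 ?add0r.
Qed.

Lemma truncated_mean_lt c : xlo P X < c -> truncated_mean c < c * rho P X c.
Proof.
move=> xlo_c; have xlo0 := xlo_ge0 P X X_ge0; have c0 : 0 <= c by lra.
pose c' := (xlo P X + c) / 2.
have [xlo_c' c'_c] : xlo P X < c' /\ c' < c by rewrite /c'; split; lra.
have rho_c' := rho_gt0 P X X_ge0 c' xlo_c'.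
have : (\int[P]_t (X t * (X t < c)%R%:R)%:E + ((c - c') * rho P X c')%:E
        <= (c * rho P X c)%:E)%E.
  rewrite !EFinM -!integral_indic_lt -!ge0_integralZl_fin ?subr_ge0 //; last exact: ltW.
  rewrite -ge0_integralD_fin //; last by move=> t; apply: mulr_ge0; rewrite // subr_ge0 ltW.
  apply: ae_ge0_le_integral_fin => //.
  - exact: measurable_funD.
  - by move=> t; apply: addr_ge0 => //; apply: mulr_ge0; rewrite // subr_ge0 ltW.
  - by move=> t; exact: mulr_ge0.
  apply: aeW => t; case: (ltP (X t) c') => Xc'.
    by rewrite (lt_trans Xc' c'_c) !mulr1; lra.
  by case: (ltP (X t) c) => Xc; rewrite ?mulr1 ?mulr0 ?addr0 // ltW.
rewrite truncated_meanE // -EFinD lee_fin.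
have : 0 < (c - c') * rho P X c' by rewrite mulr_gt0 // subr_gt0.
lra.
Qed.

Lemma xi_bounds c : xlo P X < c -> (c%:E < xhi P X)%E ->
  [/\ xlo P X <= xi P X c, xi P X c < c & rho P X c * xi P X c <= truncated_mean c].
Proof.
move=> xlo_c c_xhi; have xlo0 := xlo_ge0 P X X_ge0; have c0 : 0 <= c by lra.
have rho_c := rho_gt0 P X X_ge0 c xlo_c.
have xlo_le := xlo_rho_le_truncated_mean c c0.
have tm_lt := truncated_mean_lt c xlo_c.
rewrite /xi; case xhiE : (xhi P X) => [xb| |].
2,3: by split; rewrite // mulrC.
have mu_le := mean_le_truncated_mean c xb c0 xhiE.
have mu0 : (0 <= mu P X)%E.
  by rewrite /mu expectation_def; apply: integral_ge0 => t _; rewrite lee_fin.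
have mu_fin : mu P X \is a fin_num by rewrite ge0_fin_numE // (le_lt_trans mu_le) ?ltry.
have {mu_le} : fine (mu P X) <= truncated_mean c + xb * (1 - rho P X c).
  by rewrite -lee_fin fineK.
set A := (fine (mu P X) - (1 - rho P X c) * xb) / rho P X c => mu_le.
have rho_A : rho P X c * A <= truncated_mean c.
  by rewrite /A mulrC divfK ?gt_eqF //; lra.
have A_c : A < c by rewrite -(ltr_pM2l rho_c); apply: le_lt_trans rho_A _; rewrite mulrC.
split; first by rewrite le_max lexx orbT.
  by rewrite gt_max A_c xlo_c.
by case: (leP A (xlo P X)) => _; rewrite // mulrC.
Qed.

End TruncatedMean.

Lemma measurable_comp_within_continuous {d : measure_display} {T : measurableType d}
    {R : realType} (X : {mfun T >-> R}) (f : R -> R) :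
  (forall t, 0 <= X t) -> {within `[0, +oo[, continuous f} ->
  measurable_fun setT (fun t => f (X t)).
Proof.
move=> X_ge0 f_cont.
have mf : measurable_fun (`[0, +oo[%classic : set R) f.
  exact: subspace_continuous_measurable_fun.
apply: (measurable_comp (F := (`[0, +oo[%classic : set R))) => //.
by move=> _ [t _ <-] /=; rewrite in_itv /= andbT.
Qed.

Section NonincreasingDerivative.
Context {d : measure_display} {T : measurableType d} {R : realType}
  (P : probability T R) (X : {RV P >-> R}) (f : R -> R).
Hypothesis X_ge0 : forall t, 0 <= X t.
Hypothesis f_ge0 : forall x, 0 <= x -> 0 <= f x.
Hypothesis f_nonincreasing : forall x y, 0 <= x -> x <= y -> f y <= f x.
Hypothesis measurable_fX : measurable_fun setT (fun t => f (X t)).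

Let measurable_fX_indic c : measurable_fun setT (fun t => f (X t) * (X t < c)%R%:R).
Proof.
exact/measurable_funM/measurable_indic_X_lt.
Qed.

Lemma integral_lt_le_affine c k b : 0 <= c -> 0 <= k -> b <= 0 ->
  (forall x, xlo P X <= x < c -> f x <= k + b * x) ->
  (\int[P]_t (f (X t) * (X t < c)%R%:R)%:E
     <= (k * rho P X c + b * truncated_mean P X c)%:E)%E.
Proof.
move=> c0 k0 b0 f_affine.
have ind_ge0 (B : bool) : 0 <= B%:R :> R by case: B.
have m_ind := measurable_indic_X_lt P X c.
have m_Xind : measurable_fun setT (fun t => - b * (X t * (X t < c)%R%:R)).
  exact/measurable_funM/measurable_funM.
have Xind0 t : 0 <= - b * (X t * (X t < c)%R%:R) by rewrite !mulr_ge0 // oppr_ge0.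
have fXind0 t : 0 <= f (X t) * (X t < c)%R%:R by rewrite mulr_ge0 // f_ge0.
have : (\int[P]_t (f (X t) * (X t < c)%R%:R + - b * (X t * (X t < c)%R%:R))%:E
        <= \int[P]_t (k * (X t < c)%R%:R)%:E)%E.
  apply: ae_ge0_le_integral_fin => //; first exact: measurable_funD.
  - exact: measurable_funM.
  - by move=> t; rewrite addr_ge0.
  - by move=> t; rewrite mulr_ge0.
  apply: filterS (ae_xlo_le_X P X X_ge0) => t xlo_X.
  case: (ltP (X t) c) => Xc; rewrite ?mulr1 ?mulr0 ?addr0 //.
  by have := f_affine (X t); rewrite xlo_X Xc => /(_ isT); lra.
rewrite ge0_integralD_fin // !ge0_integralZl_fin ?oppr_ge0 //; first last.
- by move=> t; rewrite mulr_ge0.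
- exact/measurable_funM/m_ind.
rewrite truncated_meanE // integral_indic_lt -!EFinM => int_le.
by rewrite EFinD -[b]opprK mulNr EFinN leeBrDr.
Qed.

Lemma integral_lt_le_majorant c g : xlo P X < c -> (c%:E < xhi P X)%E ->
  concave_on (xlo P X) c g -> (forall y, xlo P X <= y <= c -> f y <= g y) ->
  (\int[P]_t (f (X t) * (X t < c)%R%:R)%:E <= (rho P X c * g (xi P X c))%:E)%E.
Proof.
move=> xlo_c c_xhi gc fg; have xlo0 := xlo_ge0 P X X_ge0.
have [xlo_xi xi_c rho_xi] := xi_bounds P X X_ge0 c xlo_c c_xhi.
have f_decr x y : xlo P X <= x -> x <= y -> y <= c -> f y <= f x.
  by move=> xlo_x xy _; apply: f_nonincreasing => //; exact: le_trans xlo_x.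
have [b b0 fb] := concave_majorant_supergradient f_decr gc fg xlo_xi xi_c.
set xi := xi P X c in xlo_xi xi_c rho_xi fb *.
have k0 : 0 <= g xi - b * xi.
  have : f xi <= g xi by apply: fg; rewrite xlo_xi ltW.
  have : 0 <= f xi by apply: f_ge0; lra.
  nra.
apply: le_trans (integral_lt_le_affine _ _ _ _ k0 b0 _) _.
- lra.
- by move=> x /andP[xlo_x xc]; have := fb x; rewrite xlo_x ltW //= => /(_ isT); lra.
have : b * (truncated_mean P X c - rho P X c * xi) <= 0.
  by rewrite mulr_le0_ge0 // subr_ge0.
by rewrite lee_fin; nra.
Qed.

Lemma integral_lt_le_concave_env c : xlo P X < c -> (c%:E < xhi P X)%E ->
  (\int[P]_t (f (X t) * (X t < c)%R%:R)%:E
     <= (rho P X c * concave_env f (xlo P X) c (xi P X c))%:E)%E.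
Proof.
move=> xlo_c c_xhi; have xlo0 := xlo_ge0 P X X_ge0.
have rho_c := rho_gt0 P X X_ge0 c xlo_c.
have f_le_xlo y : xlo P X <= y <= c -> f y <= f (xlo P X).
  by case/andP=> xlo_y _; exact: f_nonincreasing.
have int_le g := integral_lt_le_majorant c g xlo_c c_xhi.
have int_fin : (\int[P]_t (f (X t) * (X t < c)%R%:R)%:E)%E \is a fin_num.
  rewrite ge0_fin_numE; last by apply: integral_ge0 => t _; rewrite lee_fin mulr_ge0 ?f_ge0.
  by apply: le_lt_trans (int_le _ (concave_on_cst _ _ _) f_le_xlo) _; rewrite ltry.
rewrite -(fineK int_fin) lee_fin -[fine _](divfK (lt0r_neq0 rho_c)) mulrC ler_pM2l //.
apply: le_concave_env f_le_xlo _ => g gc fg.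
by rewrite -(ler_pM2l rho_c) mulrC divfK ?lt0r_neq0 // -lee_fin fineK // int_le.
Qed.

Lemma clow_le_cstar : (clow P X f <= cstar P X f)%E.
Proof.
apply: ge_ereal_sup => _ [c [xlo_c [c_xhi env_c]] <-]; apply: ereal_sup_ubound.
exists c => //; split; first exact: le_trans (xlo_ge0 P X X_ge0) (ltW xlo_c).
by apply: le_trans (integral_lt_le_concave_env c xlo_c c_xhi) _; rewrite lee_fin.
Qed.

End NonincreasingDerivative.

Section LogReward.
Context {R : realType}.

Definition log_reward_derive (x : R) : R := (2 * (1 + x))^-1.

Lemma concave_env_log_reward_derive a c x : 0 <= a -> a < c -> a <= x <= c ->
  concave_env log_reward_derive a c x = (1 + a + c - x) / (2 * (1 + a) * (1 + c)).
Proof.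
move=> a0 ac xac; have [a1 c1] : 0 < 1 + a /\ 0 < 1 + c by split; lra.
have chordE y : chord log_reward_derive a c y = (1 + a + c - y) / (2 * (1 + a) * (1 + c)).
  by rewrite /chord /log_reward_derive; field; rewrite !lt0r_neq0 ?subr_gt0.
rewrite concave_env_chordE // => y /andP[ay yc]; rewrite chordE -subr_ge0.
have y1 : 0 < 1 + y by lra.
have -> : (1 + a + c - y) / (2 * (1 + a) * (1 + c)) - log_reward_derive y =
    (y - a) * (c - y) / (2 * (1 + a) * (1 + c) * (1 + y)).
  by rewrite /log_reward_derive; field; rewrite !lt0r_neq0.
by rewrite divr_ge0 ?mulr_ge0 ?subr_ge0 //; lra.
Qed.

Lemma log_reward_env_condition a c x p : 0 <= a -> a < c -> a <= x <= c -> 0 < p ->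
  (p * concave_env log_reward_derive a c x <= log_reward_derive c)
  = (c <= ((1 - p) * (1 + a) + p * x) / p).
Proof.
move=> a0 ac xac p0; have [a1 c1] : 0 < 1 + a /\ 0 < 1 + c by split; lra.
rewrite concave_env_log_reward_derive // -subr_le0 -[RHS]subr_le0.
have -> : p * ((1 + a + c - x) / (2 * (1 + a) * (1 + c))) - log_reward_derive c =
    (p * c - (1 - p) * (1 + a) - p * x) / (2 * (1 + a) * (1 + c)).
  by rewrite /log_reward_derive; field; rewrite !lt0r_neq0.
have -> : c - ((1 - p) * (1 + a) + p * x) / p = (p * c - (1 - p) * (1 + a) - p * x) / p.
  by field; rewrite lt0r_neq0.
by rewrite !pmulr_lle0 ?invr_gt0 ?mulr_gt0.
Qed.

Lemma clow_log_reward_derive {d : measure_display} {T : measurableType d}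
    (P : probability T R) (X : {RV P >-> R}) : (forall t, 0 <= X t) ->
  clow P X log_reward_derive =
  ereal_sup [set c%:E | c in [set c : R | xlo P X < c /\ (c%:E < xhi P X)%E /\
                                          c <= zetabar P X c]].
Proof.
move=> X_ge0; congr ereal_sup; congr image; apply/funext => c; apply/propext.
suff cond : xlo P X < c -> (c%:E < xhi P X)%E ->
    (rho P X c * concave_env log_reward_derive (xlo P X) c (xi P X c)
       <= log_reward_derive c) = (c <= zetabar P X c).
  by split=> -[xlo_c [c_xhi H]]; do 2 split => //; rewrite ?cond // -cond.
move=> xlo_c c_xhi; have [xlo_xi xi_c _] := xi_bounds P X X_ge0 c xlo_c c_xhi.
rewrite log_reward_env_condition ?xlo_ge0 ?rho_gt0 //; last by rewrite xlo_xi ltW.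
Qed.

End LogReward.

Theorem proposition2 (d : measure_display) (T : measurableType d) (R : realType)
  (P : probability T R) (X : {RV P >-> R}) :
  (forall t, 0 <= X t) ->
  (* general reward r with continuous derivative rp *)
  (forall (r rp : R -> R),
      (forall x : R, 0 <= x -> 0 <= r x) ->
      (forall x y : R, 0 <= x -> x <= y -> r x <= r y) ->
      (forall x y t : R, 0 <= x -> 0 <= y -> 0 <= t <= 1 ->
         t * r x + (1 - t) * r y <= r (t * x + (1 - t) * y)) ->
      {within `[0, +oo[, continuous r} ->
      (forall x : R, 0 < x -> is_derive x 1 r (rp x)) ->
      {within `[0, +oo[, continuous rp} ->
      deriv_gap P X rp ->
      (clow P X rp <= cstar P X rp)%E)
  /\
  (* the log reward r(x) = (1/2) log(1 + x), r'(x) = 1 / (2 (1 + x)) *)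
  (let rp := fun x : R => (2 * (1 + x))^-1 in
   deriv_gap P X rp ->
   clow P X rp =
     ereal_sup [set c%:E | c in [set c : R | xlo P X < c /\ (c%:E < xhi P X)%E /\
                                         c <= zetabar P X c]]).
Proof.
move=> X_ge0; split; last by move=> rp _; exact: clow_log_reward_derive.
move=> r r' _ r_nondecreasing r_concave _ r_derive r'_continuous _.
apply: clow_le_cstar => //.
- exact: derive_ge0_nondecreasing r_nondecreasing r_derive r'_continuous.
- exact: derive_nonincreasing_concave r_concave r_derive r'_continuous.
- exact: measurable_comp_within_continuous.
Qed.
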